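(* Let $\{z_n\}_{n\ge 0}$ be a sequence of positive real numbers satisfying $az_{n+1}=bz_n+cz_{n-1}$ for $n\ge 1$, where $a,b,c$ are positive constants. If $z_0z_2\ge z_1^2$, then $\{z_{2n}\}_{n\ge 0}$ is log-convex and $\{z_{2n+1}\}_{n\ge 0}$ is log-concave. If $z_0z_2\le z_1^2$, then $\{z_{2n}\}_{n\ge 0}$ is log-concave and $\{z_{2n+1}\}_{n\ge 0}$ is log-convex.
   Context: A sequence $a_0,a_1,\ldots$ of nonnegative reals is log-convex (resp. log-concave) if $a_{k-1}a_{k+1}\ge a_k^2$ (resp. $\le$) for all $k\ge 1$. *)

From mathcomp Require Import all_boot all_order all_algebra.
From mathcomp Require Import reals.
Set Implicit Arguments. Unset Strict Implicit. Unset Printing Implicit Defensive.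
Import Order.TTheory GRing.Theory Num.Theory.
Local Open Scope ring_scope.

Definition log_convex (R : realType) (a : nat -> R) : Prop :=
  (forall k, 0 <= a k) /\ (forall k, (1 <= k)%N -> a k ^+ 2 <= a k.-1 * a k.+1).

Definition log_concave (R : realType) (a : nat -> R) : Prop :=
  (forall k, 0 <= a k) /\ (forall k, (1 <= k)%N -> a k.-1 * a k.+1 <= a k ^+ 2).

From mathcomp Require Import all_boot all_order all_algebra.
From mathcomp Require Import reals.
From mathcomp Require Import ring.
Set Implicit Arguments. Unset Strict Implicit. Unset Printing Implicit Defensive.
Import Order.TTheory GRing.Theory Num.Theory.
Local Open Scope ring_scope.

(* The Turán expression T_m = z_m z_{m+2} - z_{m+1}^2 of a solution of the
   recurrence satisfies a T_{m+1} = -c T_m, so T_m = (-c/a)^m T_0 alternates in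
   sign, and z_m z_{m+4} - z_{m+2}^2 = (b/a)^2 T_m.  Hence the Turán expressions
   of the even-indexed subsequence all have the sign of T_0, and those of the
   odd-indexed subsequence the opposite sign. *)

Definition turan (R : pzRingType) (x : nat -> R) (m : nat) : R :=
  x m * x m.+2 - x m.+1 ^+ 2.

Lemma log_convex_turan (R : realType) (x : nat -> R) :
  (forall k, 0 <= x k) -> (forall n, 0 <= turan x n) -> log_convex x.
Proof.
by move=> x_ge0 Tx_ge0; split=> // -[|k] // _; rewrite -subr_ge0; apply: Tx_ge0.
Qed.

Lemma log_concave_turan (R : realType) (x : nat -> R) :
  (forall k, 0 <= x k) -> (forall n, turan x n <= 0) -> log_concave x.
Proof.
by move=> x_ge0 Tx_le0; split=> // -[|k] // _; rewrite -subr_le0; apply: Tx_le0.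
Qed.

Section TwoTermRecurrence.

Variables (R : fieldType) (z : nat -> R) (a b c : R).
Hypothesis a_neq0 : a != 0.
Hypothesis z_rec : forall n, (1 <= n)%N -> a * z n.+1 = b * z n + c * z n.-1.

Lemma recurrence_next m : z m.+2 = (b * z m.+1 + c * z m) / a.
Proof. by rewrite -(z_rec (ltn0Sn m)) mulrC mulKf. Qed.

Lemma turan_succ m : turan z m.+1 = - (c / a) * turan z m.
Proof. by rewrite /turan (recurrence_next m.+1) (recurrence_next m); field. Qed.

Lemma turan_iter m : turan z m = (- (c / a)) ^+ m * turan z 0.
Proof. by elim: m => [|m IHm]; rewrite ?mul1r // turan_succ IHm exprS mulrA. Qed.

Lemma turan_skip m : z m * z m.+4 - z m.+2 ^+ 2 = (b / a) ^+ 2 * turan z m.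
Proof.
rewrite /turan (recurrence_next m.+2) (recurrence_next m.+1) (recurrence_next m).
by field.
Qed.

Lemma turan_even n :
  turan (fun k => z k.*2) n = (b / a * (c / a) ^+ n) ^+ 2 * turan z 0.
Proof.
rewrite [LHS]/turan !doubleS turan_skip turan_iter -mul2n exprM sqrrN.
by rewrite -exprM mulnC exprM; ring.
Qed.

Lemma turan_odd n :
  turan (fun k => z k.*2.+1) n = - (c / a) * (b / a * (c / a) ^+ n) ^+ 2 * turan z 0.
Proof.
rewrite [LHS]/turan !doubleS turan_skip turan_iter [_ ^+ (_.*2).+1]exprS -mul2n exprM sqrrN.
by rewrite -exprM mulnC exprM; ring.
Qed.

End TwoTermRecurrence.

Theorem corollary3p17 (R : realType) (z : nat -> R) (a b c : R) :
  (forall n, 0 < z n) -> 0 < a -> 0 < b -> 0 < c ->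
  (forall n, (1 <= n)%N -> a * z n.+1 = b * z n + c * z n.-1) ->
  (z 1%N ^+ 2 <= z 0%N * z 2%N ->
     log_convex (fun n => z n.*2) /\ log_concave (fun n => z n.*2.+1)) /\
  (z 0%N * z 2%N <= z 1%N ^+ 2 ->
     log_concave (fun n => z n.*2) /\ log_convex (fun n => z n.*2.+1)).
Proof.
move=> z_gt0 a_gt0 _ c_gt0 z_rec.
have a_neq0 : a != 0 by rewrite gt_eqF.
have z_ge0 (f : nat -> nat) k : 0 <= z (f k) by apply: ltW.
have Teven n := turan_even a_neq0 z_rec n.
have Todd n := turan_odd a_neq0 z_rec n.
have nca_le0 : - (c / a) <= 0 by rewrite oppr_le0 divr_ge0 ?ltW.
split=> T0; [have {}T0 : 0 <= turan z 0 by rewrite subr_ge0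
            |have {}T0 : turan z 0 <= 0 by rewrite subr_le0].
- split; [apply: log_convex_turan | apply: log_concave_turan] => // n.
    by rewrite Teven; apply: mulr_ge0 (sqr_ge0 _) T0.
  by rewrite Todd; apply: mulr_le0_ge0 (mulr_le0_ge0 nca_le0 (sqr_ge0 _)) T0.
- split; [apply: log_concave_turan | apply: log_convex_turan] => // n.
    by rewrite Teven; apply: mulr_ge0_le0 (sqr_ge0 _) T0.
  by rewrite Todd; apply: mulr_le0 (mulr_le0_ge0 nca_le0 (sqr_ge0 _)) T0.
Qed.
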